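(* Let $P$ be a list of properties of semigroups each of which is preserved under Rees-ideal-commensurability (i.e. if $S_1,S_2$ are Rees-ideal-commensurable then $S_1$ has the property iff $S_2$ does; properties may be negations such as ''not finitely generated''). Then there exists a homogeneous (respectively, multihomogeneous) monoid satisfying every property in $P$ if and only if there exists an $n$-ary homogeneous (respectively, $n$-ary multihomogeneous) monoid, for some $n$, satisfying every property in $P$.
   Context: A monoid is homogeneous / multihomogeneous / $n$-ary homogeneous / $n$-ary multihomogeneous if it admits a finite presentation $\langle A\mid\mathcal{R}\rangle$ with, respectively: $|u|=|v|$ for all $(u,v)\in\mathcal{R}$; $|u|_a=|v|_a$ for all $a\in A$ and $(u,v)\in\mathcal{R}$; $|u|=|v|=n$ for all $(u,v)\in\mathcal{R}$; both of the last two. An ideal $U$ of a semigroup $S$ has finite Rees index if $S\setminus U$ is finite; semigroups $S_1,S_2$ are Rees-ideal-commensurable if there are finite Rees index ideals $U_i\subseteq S_i$ with $U_1\cong U_2$. *)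

From mathcomp Require Import all_boot.
From Stdlib Require List.
Set Implicit Arguments. Unset Strict Implicit. Unset Printing Implicit Defensive.

Record semigroup := Semigroup {
  sg_car :> Type;
  sg_op : sg_car -> sg_car -> sg_car;
  sg_assoc : forall x y z, sg_op x (sg_op y z) = sg_op (sg_op x y) z }.

Record monoid := Monoid {
  mon_sg :> semigroup;
  mon_one : mon_sg;
  mon_one_l : forall x, sg_op mon_one x = x;
  mon_one_r : forall x, sg_op x mon_one = x }.

Definition is_ideal (S : semigroup) (U : S -> Prop) : Prop :=
  (exists u, U u) /\
  (forall s u, U u -> U (sg_op s u) /\ U (sg_op u s)).

Definition finite_rees_index (S : semigroup) (U : S -> Prop) : Prop :=
  exists l : list S, forall x, ~ U x -> List.In x l.

Definition sub_iso (S1 S2 : semigroup) (U1 : S1 -> Prop) (U2 : S2 -> Prop)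
  (f : S1 -> S2) : Prop :=
  (forall x, U1 x -> U2 (f x)) /\
  (forall x y, U1 x -> U1 y -> f x = f y -> x = y) /\
  (forall z, U2 z -> exists x, U1 x /\ f x = z) /\
  (forall x y, U1 x -> U1 y -> f (sg_op x y) = sg_op (f x) (f y)).

Definition rees_ideal_commensurable (S1 S2 : semigroup) : Prop :=
  exists (U1 : S1 -> Prop) (U2 : S2 -> Prop) (f : S1 -> S2),
    is_ideal U1 /\ finite_rees_index U1 /\
    is_ideal U2 /\ finite_rees_index U2 /\ sub_iso U1 U2 f.

Definition ric_invariant (P : semigroup -> Prop) : Prop :=
  forall S1 S2 : semigroup, rees_ideal_commensurable S1 S2 -> (P S1 <-> P S2).

Inductive cong (A : Type) (R : seq (seq A * seq A)) : seq A -> seq A -> Prop :=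
  | cong_step : forall p q u v, List.In (u, v) R -> cong R (p ++ u ++ q) (p ++ v ++ q)
  | cong_refl : forall w, cong R w w
  | cong_sym : forall w1 w2, cong R w1 w2 -> cong R w2 w1
  | cong_trans : forall w1 w2 w3, cong R w1 w2 -> cong R w2 w3 -> cong R w1 w3.

(** M is (isomorphic to) the monoid presented by <A | R>: there is a surjective
    monoid homomorphism A^* -> M whose kernel is the congruence generated by R. *)
Definition presents (A : finType) (R : seq (seq A * seq A)) (M : monoid) : Prop :=
  exists f : seq A -> M,
    f [::] = mon_one M /\
    (forall u v, f (u ++ v) = sg_op (f u) (f v)) /\
    (forall m : M, exists w, f w = m) /\
    (forall u v, f u = f v <-> cong R u v).

Definition homogeneous (M : monoid) : Prop :=
  exists (A : finType) (R : seq (seq A * seq A)), presents R M /\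
    forall u v, List.In (u, v) R -> size u = size v.

Definition multihomogeneous (M : monoid) : Prop :=
  exists (A : finType) (R : seq (seq A * seq A)), presents R M /\
    forall u v, List.In (u, v) R -> forall a : A, count_mem a u = count_mem a v.

Definition nary_homogeneous (n : nat) (M : monoid) : Prop :=
  exists (A : finType) (R : seq (seq A * seq A)), presents R M /\
    forall u v, List.In (u, v) R -> size u = n /\ size v = n.

Definition nary_multihomogeneous (n : nat) (M : monoid) : Prop :=
  exists (A : finType) (R : seq (seq A * seq A)), presents R M /\
    forall u v, List.In (u, v) R ->
      (size u = n /\ size v = n) /\ (forall a : A, count_mem a u = count_mem a v).

Definition satisfies_all (Ps : list (semigroup -> Prop)) (S : semigroup) : Prop :=
  forall P, List.In P Ps -> P S.

(* Let <A | R> be a homogeneous presentation of M and let n bound the lengths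
   of the relations in R. Length is an invariant of M, and the relations of R
   act on words of length at least n exactly as the set R' of all relations
   between words of length n that hold in M: a relation applied inside a long
   word can be widened to a window of length n. Hence <A | R'> is n-ary
   homogeneous (multihomogeneous if R is), and in both monoids the elements
   represented by words of length at least n form isomorphic ideals whose
   complements are images of the finitely many shorter words. *)

From Pilot Require Import Defs.
From mathcomp Require Import all_boot zify.
From Stdlib Require List.
From Stdlib Require Import ClassicalEpsilon FunctionalExtensionality PropExtensionality.

Set Implicit Arguments. Unset Strict Implicit.

Section Congruence.
Variable A : Type.
Implicit Types (R : seq (seq A * seq A)) (u v w : seq A).

Lemma cong_catl R u v w : cong R u v -> cong R (w ++ u) (w ++ v).
Proof.
elim=> [p q x y xy | x | x y _ | x y z _ + _]; last exact: cong_trans.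
- by move: (cong_step (w ++ p) q xy); rewrite -!catA.
- exact: cong_refl.
- exact: cong_sym.
Qed.

Lemma cong_catr R u v w : cong R u v -> cong R (u ++ w) (v ++ w).
Proof.
elim=> [p q x y xy | x | x y _ | x y z _ + _]; last exact: cong_trans.
- by move: (cong_step p (q ++ w) xy); rewrite -!catA.
- exact: cong_refl.
- exact: cong_sym.
Qed.

Lemma cong_cat R u1 u2 v1 v2 :
  cong R u1 v1 -> cong R u2 v2 -> cong R (u1 ++ u2) (v1 ++ v2).
Proof. by move=> /(cong_catr u2) h1 /(cong_catl v1); apply: cong_trans. Qed.

Lemma cong_sub R R' u v :
  (forall x y, List.In (x, y) R' -> cong R x y) -> cong R' u v -> cong R u v.
Proof.
move=> sR'; elim=> [p q x y /sR' xy | x | x y _ | x y z _ + _]; last exact: cong_trans.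
- exact: cong_catl _ (cong_catr _ xy).
- exact: cong_refl.
- exact: cong_sym.
Qed.

Lemma cong_additive_inv R (g : seq A -> nat) u v :
  (forall x y, g (x ++ y) = g x + g y) ->
  (forall x y, List.In (x, y) R -> g x = g y) -> cong R u v -> g u = g v.
Proof.
move=> gD gR; elim=> [p q x y /gR xy | // | x y _ -> // | x y z _ -> _ -> //].
by rewrite !gD xy.
Qed.

End Congruence.

Section PresentedMonoid.
Variables (A : eqType) (R : seq (seq A * seq A)).

Definition nf (w : seq A) : seq A := epsilon (inhabits [::]) (cong R w).

Lemma nf_cong w : cong R w (nf w).
Proof. exact: (epsilon_spec _ _ (ex_intro _ w (cong_refl R w))). Qed.

Lemma nf_eq u v : cong R u v -> nf u = nf v.
Proof.
move=> uv; congr (epsilon _); apply: functional_extensionality => w.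
apply: propositional_extensionality; split.
- exact: cong_trans (cong_sym uv).
- exact: cong_trans uv.
Qed.

Lemma nf_idem w : nf (nf w) = nf w.
Proof. exact/nf_eq/cong_sym/nf_cong. Qed.

Definition pres_car := {w : seq A | nf w == w}.

Definition pres_mk (w : seq A) : pres_car := exist _ (nf w) (introT eqP (nf_idem w)).

Definition pres_op (x y : pres_car) : pres_car := pres_mk (val x ++ val y).

Lemma pres_nf (x : pres_car) : nf (val x) = val x.
Proof. exact: eqP (valP x). Qed.

Lemma pres_mk_cat u v : pres_mk (u ++ v) = pres_op (pres_mk u) (pres_mk v).
Proof. by apply: val_inj; apply/nf_eq/cong_cat; apply: nf_cong. Qed.

Lemma pres_mk_val (x : pres_car) : pres_mk (val x) = x.
Proof. by apply: val_inj; rewrite /= pres_nf. Qed.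

Lemma pres_opA (x y z : pres_car) : pres_op x (pres_op y z) = pres_op (pres_op x y) z.
Proof. by rewrite -[x]pres_mk_val -[y]pres_mk_val -[z]pres_mk_val -!pres_mk_cat catA. Qed.

Definition pres_semigroup : semigroup := @Defs.Semigroup pres_car pres_op pres_opA.

Lemma pres_op1l (x : pres_car) : pres_op (pres_mk [::]) x = x.
Proof. by rewrite -[x]pres_mk_val -pres_mk_cat. Qed.

Lemma pres_op1r (x : pres_car) : pres_op x (pres_mk [::]) = x.
Proof. by rewrite -[x]pres_mk_val -pres_mk_cat cats0. Qed.

Definition pres_monoid : monoid :=
  @Defs.Monoid pres_semigroup (pres_mk [::]) pres_op1l pres_op1r.

End PresentedMonoid.

Lemma pres_monoid_presents (A : finType) (R : seq (seq A * seq A)) :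
  presents R (pres_monoid R).
Proof.
exists (pres_mk R); split=> //; split; first exact: pres_mk_cat.
split=> [x | u v]; first by exists (val x); apply: pres_mk_val.
split=> [/(congr1 val) /= uv | /nf_eq uv]; last exact: val_inj.
by apply: cong_trans (nf_cong R u) _; rewrite uv; apply/cong_sym/nf_cong.
Qed.

Lemma in_seqP (T : eqType) (x : T) (s : seq T) : reflect (List.In x s) (x \in s).
Proof.
elim: s => [|y s IH] /=; first exact: ReflectF.
rewrite in_cons; apply: (iffP orP) => [[/eqP -> | /IH] | [-> | /IH]];
  by [left | right | rewrite eqxx].
Qed.

Section LongWords.
Variables (A : finType) (M : semigroup) (phi : seq A -> M) (n : nat).
Hypothesis phi_cat : forall u v, phi (u ++ v) = sg_op (phi u) (phi v).
Hypothesis phi_surj : forall m, exists w, phi w = m.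

Definition long_image (m : M) : Prop := exists w, phi w = m /\ n <= size w.

Lemma short_images_finite : exists l : list M, forall w, size w < n -> List.In (phi w) l.
Proof.
exists (map phi (flatten [seq [seq tval t | t <- enum {: k.-tuple A}] | k <- iota 0 n])).
move=> w w_short; apply/List.in_map/in_seqP/flatten_mapP.
exists (size w); first by rewrite mem_iota.
by apply/mapP; exists (in_tuple w); rewrite ?mem_enum.
Qed.

Lemma long_image_ideal : (exists w : seq A, size w = n) -> is_ideal long_image.
Proof.
move=> [w0 w0_n]; split; first by exists (phi w0), w0; rewrite w0_n.
move=> s _ [w [<- w_long]]; have [ws <-] := phi_surj s.
by split; [exists (ws ++ w) | exists (w ++ ws)]; rewrite phi_cat size_cat; split=> //; lia.
Qed.

Lemma long_image_finite_rees_index : finite_rees_index long_image.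
Proof.
have [l short_l] := short_images_finite; exists l => m m_short.
have [w phi_w] := phi_surj m; rewrite -phi_w; apply: short_l.
by rewrite ltnNge; apply/negP => w_long; apply: m_short; exists w.
Qed.

End LongWords.

(* Both ideals consist of the images of the words of length at least [n]; a
   word of that length represents the same element in [M] as its [phi]-section
   does, so [psi] of a section of [phi] is the required isomorphism. *)
Lemma rees_ideal_commensurable_of_long_kernels (A : finType) (M N : semigroup)
    (phi : seq A -> M) (psi : seq A -> N) (n : nat) :
  (forall u v, phi (u ++ v) = sg_op (phi u) (phi v)) -> (forall m, exists w, phi w = m) ->
  (forall u v, psi (u ++ v) = sg_op (psi u) (psi v)) -> (forall m, exists w, psi w = m) ->
  (forall u v, phi u = phi v -> size u = size v) ->
  (forall u v, n <= size u -> phi u = phi v <-> psi u = psi v) ->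
  (exists w : seq A, size w = n) ->
  rees_ideal_commensurable M N.
Proof.
move=> phi_cat phi_surj psi_cat psi_surj phi_size agree wn.
pose pre m := epsilon (inhabits [::]) (fun w => phi w = m).
have phi_pre m : phi (pre m) = m by exact: epsilon_spec (phi_surj m).
have pre_long m : long_image phi n m -> n <= size (pre m).
  by case=> w [<- w_long]; rewrite (phi_size _ _ (phi_pre _)).
exists (long_image phi n), (long_image psi n), (psi \o pre).
split; first exact: long_image_ideal phi_cat phi_surj wn.
split; first exact: long_image_finite_rees_index phi_surj.
split; first exact: long_image_ideal psi_cat psi_surj wn.
split; first exact: long_image_finite_rees_index psi_surj.
split; [|split; [|split]].
- by move=> x /pre_long x_long; exists (pre x).
- move=> x y /pre_long x_long _ /= /(agree _ _ x_long).
  by rewrite !phi_pre.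
- move=> _ [w [<- w_long]]; exists (phi w); split; first by exists w.
  by symmetry; apply/(agree _ _ w_long); rewrite phi_pre.
- move=> x y /pre_long x_long _ /=; rewrite -psi_cat; symmetry.
  by apply/agree; rewrite ?size_cat ?phi_cat ?phi_pre //; lia.
Qed.

Lemma split_window (A : Type) (p x q : seq A) (n : nat) :
  size x <= n <= size p + size x + size q ->
  exists p1 p2 q1 q2, [/\ p = p1 ++ p2, q = q1 ++ q2 & size (p2 ++ x ++ q1) = n].
Proof.
move=> /andP [x_n n_pxq].
pose a := minn (size p) (n - size x); pose b := n - size x - a.
have b_q : b <= size q by rewrite /b /a; lia.
exists (take (size p - a) p), (drop (size p - a) p), (take b q), (drop b q).
by rewrite !cat_take_drop !size_cat size_drop (size_takel b_q) /b /a; split=> //; lia.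
Qed.

Lemma cong_window (A : Type) (R R' : seq (seq A * seq A)) (n : nat) u v :
  (forall x y, List.In (x, y) R -> size x = size y /\ size x <= n) ->
  (forall x y, size x = n -> size y = n -> cong R x y -> List.In (x, y) R') ->
  cong R u v -> n <= size u -> cong R' u v.
Proof.
move=> R_n R'_n; have R_size x y : cong R x y -> size x = size y.
  by apply: cong_additive_inv => [x' y' | x' y' /R_n []]; rewrite ?size_cat.
elim=> [p q x y xy | x | x y xy IH | x y z xy IHxy _ IHyz] u_long.
- have [x_y x_n] := R_n _ _ xy.
  have /split_window [p1 [p2 [q1 [q2 [-> -> window_n]]]]] :
      size x <= n <= size p + size x + size q.
    by rewrite x_n; move: u_long; rewrite !size_cat addnA.
  have regroup z : (p1 ++ p2) ++ z ++ q1 ++ q2 = p1 ++ (p2 ++ z ++ q1) ++ q2.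
    by rewrite -!catA.
  rewrite !regroup; apply: cong_step; apply: R'_n => //.
    by move: window_n; rewrite !size_cat x_y.
  exact: cong_step.
- exact: cong_refl.
- by apply/cong_sym/IH; rewrite (R_size _ _ xy).
- by apply: cong_trans (IHxy u_long) (IHyz _); rewrite -(R_size _ _ xy).
Qed.

Definition classic_bool (P : Prop) : bool :=
  if excluded_middle_informative P then true else false.

Lemma classic_boolP (P : Prop) : reflect P (classic_bool P).
Proof. by rewrite /classic_bool; case: excluded_middle_informative; constructor. Qed.

Definition length_consequences (A : finType) (R : seq (seq A * seq A)) (n : nat) :=
  [seq (tval t.1, tval t.2) | t : n.-tuple A * n.-tuple A <- enum {: n.-tuple A * n.-tuple A}
                             & classic_bool (cong R t.1 t.2)].

Lemma in_length_consequences (A : finType) (R : seq (seq A * seq A)) n u v :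
  List.In (u, v) (length_consequences R n) <-> [/\ size u = n, size v = n & cong R u v].
Proof.
split=> [/in_seqP /mapP [[s t]] | [u_n v_n uv]].
  by rewrite mem_filter => /andP [/classic_boolP st _] [-> ->]; rewrite !size_tuple.
apply/in_seqP/mapP.
have u_tuple : size u == n by rewrite u_n.
have v_tuple : size v == n by rewrite v_n.
exists (Tuple u_tuple, Tuple v_tuple) => //.
by rewrite mem_filter mem_enum andbT; apply/classic_boolP.
Qed.

Lemma relation_size_bound (A : Type) (R : seq (seq A * seq A)) :
  exists n, (forall u v, List.In (u, v) R -> size u <= n) /\ exists w : seq A, size w = n.
Proof.
elim: R => [|[a b] R [n [R_n [w w_n]]]]; first by exists 0; split=> //; exists [::].
exists (maxn (size a) n); split.
  by move=> u v [[<- _] | /R_n u_n]; rewrite leq_max ?leqnn ?u_n ?orbT.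
by case: (leqP (size a) n) => [a_n | n_a]; [exists w | exists a]; lia.
Qed.

Lemma homogeneous_presentation_ric (A : finType) (R : seq (seq A * seq A)) (M : monoid) :
  presents R M -> (forall u v, List.In (u, v) R -> size u = size v) ->
  exists n, rees_ideal_commensurable M (pres_monoid (length_consequences R n)).
Proof.
case=> phi [_ [phi_cat [phi_surj phi_ker]]] R_size.
have [n [R_n wn]] := relation_size_bound R; exists n.
have [psi [_ [psi_cat [psi_surj psi_ker]]]] := pres_monoid_presents (length_consequences R n).
apply: (rees_ideal_commensurable_of_long_kernels phi_cat phi_surj psi_cat psi_surj _ _ wn).
  by move=> u v /phi_ker; apply: cong_additive_inv => [|x y /R_size]; first exact: size_cat.
move=> u v u_long; rewrite phi_ker psi_ker; split.
  move=> uv; apply: (cong_window (n := n)) uv u_long => [x y xy | x y x_n y_n xy].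
    by split; [apply: R_size _ _ xy | apply: R_n _ _ xy].
  exact/in_length_consequences.
by apply: cong_sub => x y /in_length_consequences [].
Qed.

Lemma homogeneous_ric_nary_homogeneous (M : monoid) :
  homogeneous M -> exists n (M' : monoid), nary_homogeneous n M' /\ rees_ideal_commensurable M M'.
Proof.
case=> A [R [presM R_size]]; have [n ric] := homogeneous_presentation_ric presM R_size.
exists n, (pres_monoid (length_consequences R n)); split=> //.
exists A, (length_consequences R n); split; first exact: pres_monoid_presents.
by move=> u v /in_length_consequences [].
Qed.

Lemma multihomogeneous_ric_nary_multihomogeneous (M : monoid) :
  multihomogeneous M ->
  exists n (M' : monoid), nary_multihomogeneous n M' /\ rees_ideal_commensurable M M'.
Proof.
case=> A [R [presM R_count]].
have R_size u v : List.In (u, v) R -> size u = size v.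
  by move=> /R_count uv; apply/perm_size/allP => a _; apply/eqP.
have [n ric] := homogeneous_presentation_ric presM R_size.
exists n, (pres_monoid (length_consequences R n)); split=> //.
exists A, (length_consequences R n); split; first exact: pres_monoid_presents.
move=> u v /in_length_consequences [u_n v_n uv]; split=> // a.
by apply: cong_additive_inv uv => [x y | x y /R_count]; rewrite ?count_cat.
Qed.

Lemma nary_homogeneous_homogeneous n (M : monoid) : nary_homogeneous n M -> homogeneous M.
Proof. by move=> [A [R [presM R_n]]]; exists A, R; split=> // u v /R_n [-> ->]. Qed.

Lemma nary_multihomogeneous_multihomogeneous n (M : monoid) :
  nary_multihomogeneous n M -> multihomogeneous M.
Proof. by move=> [A [R [presM R_n]]]; exists A, R; split=> // u v /R_n []. Qed.

Lemma satisfies_all_ric (Ps : list (semigroup -> Prop)) (S1 S2 : semigroup) :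
  (forall P, List.In P Ps -> ric_invariant P) -> rees_ideal_commensurable S1 S2 ->
  satisfies_all Ps S1 -> satisfies_all Ps S2.
Proof. by move=> Ps_inv ric S1_Ps P P_in; apply/(Ps_inv P P_in _ _ ric); apply: S1_Ps. Qed.

Theorem corollary5p6 (Ps : list (semigroup -> Prop)) :
  (forall P, List.In P Ps -> ric_invariant P) ->
  ((exists M : monoid, homogeneous M /\ satisfies_all Ps M) <->
   (exists (n : nat) (M : monoid), nary_homogeneous n M /\ satisfies_all Ps M)) /\
  ((exists M : monoid, multihomogeneous M /\ satisfies_all Ps M) <->
   (exists (n : nat) (M : monoid), nary_multihomogeneous n M /\ satisfies_all Ps M)).
Proof.
move=> Ps_inv; split; split.
- case=> M [/homogeneous_ric_nary_homogeneous [n [M' [M'_nary ric]]] M_Ps].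
  by exists n, M'; split; last exact: satisfies_all_ric ric M_Ps.
- by case=> n [M [/nary_homogeneous_homogeneous M_hom M_Ps]]; exists M.
- case=> M [/multihomogeneous_ric_nary_multihomogeneous [n [M' [M'_nary ric]]] M_Ps].
  by exists n, M'; split; last exact: satisfies_all_ric ric M_Ps.
- by case=> n [M [/nary_multihomogeneous_multihomogeneous M_hom M_Ps]]; exists M.
Qed.
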